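(* Let $A$ be a nonempty countable alphabet and $X\subseteq A^{\mathbb{N}}$ a shift space. The following are equivalent: (i) $X$ is a shift of finite order; (ii) $(X,d_\Pi,\sigma)$ has the shadowing property; (iii) $(X,d_\Pi,\sigma)$ has the finite shadowing property.
   Context: $A$ carries the discrete topology; $A^{\mathbb{N}}$ carries the product topology and the metric $d_\Pi(x,y)=1/(i+1)$ where $i$ is the least index with $x_i\ne y_i$ ($d_\Pi(x,x)=0$). The shift map is $\sigma((x_i)_i)=(x_{i+1})_i$. A shift space is a closed $X\subseteq A^{\mathbb{N}}$ with $\sigma(X)\subseteq X$. For a set $F$ of finite words over $A$, $X_F$ is the set of sequences in $A^{\mathbb{N}}$ containing no word of $F$ as a block of consecutive entries. $X$ has order $p$ ($p\in\mathbb{N}$) if $X=X_F$ for some set $F$ of words all of length $p$; $X$ is of finite order if it has order $p$ for some $p$. For a map $f$ on a metric space, a $\delta$-pseudo-orbit is a (finite or infinite) sequence $(x_n)$ with $d(f(x_n),x_{n+1})<\delta$ for consecutive indices; $x$ $\varepsilon$-shadows it if $d(f^n(x),x_n)<\varepsilon$ for all indices. Finite shadowing property: for every $\varepsilon>0$ there is $\delta>0$ such that every finite $\delta$-pseudo-orbit is $\varepsilon$-shadowed by some point; shadowing property: the same for infinite pseudo-orbits. *)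

From Stdlib Require Import Reals List Classical ClassicalEpsilon.
Open Scope R_scope.

Section Shift.
Variable A : Type.

Definition seqA := nat -> A.

Definition shift (x : seqA) : seqA := fun i => x (S i).

Definition shift_iter (n : nat) (x : seqA) : seqA := Nat.iter n shift x.

Definition dPi (x y : seqA) : R :=
  match excluded_middle_informative (x = y) with
  | left _ => 0
  | right _ =>
      / INR (S (epsilon (inhabits 0%nat)
                  (fun i => x i <> y i /\ forall j, (j < i)%nat -> x j = y j)))
  end.

(* closed in the product topology (A discrete): a point all of whose basic
   cylinder neighbourhoods meet X lies in X *)
Definition closed_prod (X : seqA -> Prop) : Prop :=
  forall x, (forall n : nat, exists y, X y /\ forall i, (i < n)%nat -> y i = x i) -> X x.

Definition shift_space (X : seqA -> Prop) : Prop :=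
  closed_prod X /\ forall x, X x -> X (shift x).

Definition occurs (w : list A) (x : seqA) : Prop :=
  exists k : nat, forall i, (i < length w)%nat -> nth_error w i = Some (x (k + i)%nat).

Definition X_F (F : list A -> Prop) (x : seqA) : Prop :=
  forall w, F w -> ~ occurs w x.

Definition has_order (X : seqA -> Prop) (p : nat) : Prop :=
  exists F : list A -> Prop,
    (forall w, F w -> length w = p) /\ (forall x, X x <-> X_F F x).

Definition finite_order (X : seqA -> Prop) : Prop :=
  exists p : nat, has_order X p.

Definition finite_shadowing (X : seqA -> Prop) : Prop :=
  forall eps : R, eps > 0 -> exists delta : R, delta > 0 /\
    forall (n : nat) (xs : nat -> seqA),
      (forall k, (k <= n)%nat -> X (xs k)) ->
      (forall k, (k < n)%nat -> dPi (shift (xs k)) (xs (S k)) < delta) ->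
      exists x, X x /\ forall k, (k <= n)%nat -> dPi (shift_iter k x) (xs k) < eps.

Definition shadowing (X : seqA -> Prop) : Prop :=
  forall eps : R, eps > 0 -> exists delta : R, delta > 0 /\
    forall xs : nat -> seqA,
      (forall k, X (xs k)) ->
      (forall k, dPi (shift (xs k)) (xs (S k)) < delta) ->
      exists x, X x /\ forall k, dPi (shift_iter k x) (xs k) < eps.

End Shift.

(** A shift of order p contains every sequence all of whose
    p-blocks occur in it. If δ ≤ 1/(N+p+1), consecutive points of a
    δ-pseudo-orbit agree (after shifting) on their first N+p+1 places, so the
    sequence of 0-th coordinates of the pseudo-orbit has all its p-blocks in X;
    it therefore lies in X and shadows the pseudo-orbit. Shadowing gives finite
    shadowing by continuing a finite pseudo-orbit along the true orbit of its
    last point. Conversely, if δ-pseudo-orbits are 1-shadowed and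
    1/(p+1) < δ, then a sequence all of whose (p+2)-blocks occur in X is
    traced by a δ-pseudo-orbit in X; the shadowing points agree with it on
    longer and longer prefixes, so it lies in the closed set X, and X is
    defined by forbidding the (p+2)-words that occur in no point of X. *)

From Stdlib Require Import Reals List Classical ClassicalEpsilon.
From Stdlib Require Import Lia Lra FunctionalExtensionality.

Section ShiftSpaces.
Variable A : Type.
Implicit Types (x y z : seqA A) (X : seqA A -> Prop).

Lemma first_diff x y : x <> y ->
  exists i, x i <> y i /\ forall j, (j < i)%nat -> x j = y j.
Proof.
  intro Hxy.
  assert (Hk : exists k, x k <> y k).
  { apply NNPP; intro Hall; apply Hxy, functional_extensionality; intro k.
    apply NNPP; intro Hk; apply Hall; exists k; exact Hk. }
  destruct Hk as [k Hk].
  induction k as [k IH] using (well_founded_induction Wf_nat.lt_wf).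
  destruct (classic (forall j, (j < k)%nat -> x j = y j)) as [Hbelow | Hbelow].
  - exists k; split; assumption.
  - apply not_all_ex_not in Hbelow; destruct Hbelow as [j Hj].
    apply imply_to_and in Hj; destruct Hj as [Hjk Hj].
    exact (IH j Hjk Hj).
Qed.

Lemma dPi_first_diff x y : x <> y ->
  exists i, x i <> y i /\ (forall j, (j < i)%nat -> x j = y j) /\
    dPi A x y = / INR (S i).
Proof.
  intro Hxy; unfold dPi.
  destruct (excluded_middle_informative (x = y)) as [E | _]; [contradiction |].
  set (P := fun i => x i <> y i /\ forall j, (j < i)%nat -> x j = y j).
  assert (HP : P (epsilon (inhabits 0%nat) P))
    by (apply epsilon_spec, first_diff, Hxy).
  destruct HP as [Hneq Hbelow].
  exists (epsilon (inhabits 0%nat) P); auto.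
Qed.

Lemma dPi_refl x : dPi A x x = 0.
Proof.
  unfold dPi; destruct (excluded_middle_informative (x = x)); congruence.
Qed.

Lemma inv_INR_S_pos m : 0 < / INR (S m).
Proof. apply Rinv_0_lt_compat, lt_0_INR; lia. Qed.

Lemma dPi_lt_iff x y m :
  dPi A x y < / INR (S m) <-> forall j, (j <= m)%nat -> x j = y j.
Proof.
  destruct (classic (x = y)) as [<- | Hxy].
  { rewrite dPi_refl; split; [reflexivity | intros _; apply inv_INR_S_pos]. }
  destruct (dPi_first_diff x y Hxy) as [i [Hi [Hbelow ->]]].
  split.
  - intros Hlt j Hj; apply Hbelow.
    destruct (Nat.le_gt_cases i m) as [Him | Hmi]; [| lia].
    assert (/ INR (S m) <= / INR (S i))
      by (apply Rinv_le_contravar; [apply lt_0_INR; lia | apply le_INR; lia]).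
    lra.
  - intros Hagree.
    assert (Hmi : (m < i)%nat).
    { destruct (Nat.le_gt_cases i m) as [Him | Hmi]; [| exact Hmi].
      exfalso; apply Hi, Hagree, Him. }
    apply Rinv_lt_contravar.
    + apply Rmult_lt_0_compat; apply lt_0_INR; lia.
    + apply lt_INR; lia.
Qed.

Lemma inv_INR_S_lt eps : eps > 0 -> exists N, / INR (S N) < eps.
Proof.
  intro Heps; destruct (archimed_cor1 eps Heps) as [N [HN HN0]].
  exists N; eapply Rlt_trans; [| exact HN].
  apply Rinv_lt_contravar.
  - apply Rmult_lt_0_compat; apply lt_0_INR; lia.
  - apply lt_INR; lia.
Qed.

Lemma shift_iter_apply k x j : shift_iter A k x j = x (k + j)%nat.
Proof.
  revert x j; induction k as [| k IH]; intros x j; [reflexivity |].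
  change (shift_iter A (S k) x) with (shift A (shift_iter A k x)).
  unfold shift; rewrite IH; f_equal; lia.
Qed.

Lemma shift_space_shift_iter X : shift_space A X ->
  forall k x, X x -> X (shift_iter A k x).
Proof.
  intros [_ Hshift] k; induction k as [| k IH]; intros x Hx; [exact Hx |].
  change (shift_iter A (S k) x) with (shift A (shift_iter A k x)).
  apply Hshift, IH, Hx.
Qed.

Definition locally_in X q x : Prop :=
  forall k, exists z, X z /\ forall i, (i < q)%nat -> z i = x (k + i)%nat.

Definition forbidden_words X q (w : list A) : Prop :=
  length w = q /\ ~ (exists y, X y /\ occurs A w y).

Lemma has_order_locally_in X p x : has_order A X p -> locally_in X p x -> X x.
Proof.
  intros [F [HFlen HXF]] Hloc; apply HXF; intros w Hw [k Hk].
  destruct (Hloc k) as [z [Hz Hzx]].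
  apply (proj1 (HXF z) Hz w Hw); exists 0%nat; intros i Hi.
  rewrite Hk by exact Hi; rewrite Nat.add_0_l, Hzx; [reflexivity |].
  rewrite <- (HFlen w Hw); exact Hi.
Qed.

Lemma locally_in_of_X_F_forbidden X q x : shift_space A X ->
  X_F A (forbidden_words X q) x -> locally_in X q x.
Proof.
  intros HX HxF k.
  set (w := map x (seq k q)).
  assert (Hw_len : length w = q) by (unfold w; rewrite length_map, length_seq; reflexivity).
  assert (Hw_nth : forall i, (i < q)%nat -> nth_error w i = Some (x (k + i)%nat)).
  { intros i Hi; unfold w; rewrite nth_error_map, nth_error_seq.
    destruct (Nat.ltb_spec i q); [reflexivity | lia]. }
  destruct (classic (exists y, X y /\ occurs A w y)) as [[y [Hy [m Hm]]] | Hnot].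
  - exists (shift_iter A m y); split; [apply shift_space_shift_iter; assumption |].
    intros i Hi; rewrite shift_iter_apply.
    specialize (Hm i ltac:(lia)); rewrite Hw_nth in Hm by exact Hi; congruence.
  - exfalso; apply (HxF w); [split; assumption |].
    exists k; intros i Hi; apply Hw_nth; lia.
Qed.

Lemma has_order_of_locally_in X q :
  shift_space A X -> (forall x, locally_in X q x -> X x) -> has_order A X q.
Proof.
  intros HX Hloc; exists (forbidden_words X q); split; [intros w [Hw _]; exact Hw |].
  intro x; split.
  - intros Hx w [_ Hw] Hocc; apply Hw; exists x; split; assumption.
  - intro HxF; apply Hloc, locally_in_of_X_F_forbidden; assumption.
Qed.

Lemma pseudo_orbit_trace (xs : nat -> seqA A) m :
  (forall k, dPi A (shift A (xs k)) (xs (S k)) < / INR (S m)) ->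
  forall i k, (i <= S m)%nat -> xs (k + i)%nat 0%nat = xs k i.
Proof.
  intros Hps; induction i as [| i IH]; intros k Hi; [rewrite Nat.add_0_r; reflexivity |].
  replace (k + S i)%nat with (S k + i)%nat by lia.
  rewrite IH by lia; symmetry.
  exact (proj1 (dPi_lt_iff _ _ _) (Hps k) i ltac:(lia)).
Qed.

Lemma shadowing_of_has_order X p : has_order A X p -> shadowing A X.
Proof.
  intros Hord eps Heps.
  destruct (inv_INR_S_lt eps Heps) as [N HN].
  exists (/ INR (S (N + p))); split; [apply inv_INR_S_pos |].
  intros xs HXs Hps.
  pose proof (pseudo_orbit_trace xs (N + p) Hps) as Htrace.
  exists (fun k => xs k 0%nat); split.
  - apply (has_order_locally_in X p _ Hord); intro k.
    exists (xs k); split; [apply HXs |].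
    intros i Hi; symmetry; apply Htrace; lia.
  - intro k; eapply Rlt_trans; [| exact HN].
    apply dPi_lt_iff; intros j Hj; rewrite shift_iter_apply; apply Htrace; lia.
Qed.

Lemma finite_shadowing_of_shadowing X :
  shift_space A X -> shadowing A X -> finite_shadowing A X.
Proof.
  intros HX Hsh eps Heps.
  destruct (Hsh eps Heps) as [delta [Hdelta Hshadow]].
  exists delta; split; [exact Hdelta |]; intros n xs HXs Hps.
  set (ys := fun k => if (k <=? n)%nat then xs k else shift_iter A (k - n) (xs n)).
  assert (Hys : forall k, (k <= n)%nat -> ys k = xs k).
  { intros k Hk; unfold ys; rewrite (proj2 (Nat.leb_le k n) Hk); reflexivity. }
  assert (Hys_tail : forall k, (n <= k)%nat -> ys k = shift_iter A (k - n) (xs n)).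
  { intros k Hk; unfold ys; destruct (Nat.leb_spec k n) as [Hkn | Hkn]; [| reflexivity].
    replace k with n by lia; rewrite Nat.sub_diag; reflexivity. }
  destruct (Hshadow ys) as [x [Hx Hclose]].
  - intro k; destruct (Nat.le_gt_cases k n) as [Hk | Hk].
    + rewrite Hys by exact Hk; apply HXs, Hk.
    + rewrite Hys_tail by lia; apply shift_space_shift_iter, HXs; auto.
  - intro k; destruct (Nat.le_gt_cases (S k) n) as [Hk | Hk].
    + rewrite !Hys by lia; apply Hps; lia.
    + rewrite !Hys_tail by lia; replace (S k - n)%nat with (S (k - n)) by lia.
      change (shift_iter A (S (k - n)) (xs n)) with (shift A (shift_iter A (k - n) (xs n))).
      rewrite dPi_refl; exact Hdelta.
  - exists x; split; [exact Hx |]; intros k Hk; rewrite <- Hys by exact Hk; apply Hclose.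
Qed.

Lemma finite_shadowing_locally_in X : shift_space A X -> finite_shadowing A X ->
  exists q, forall x, locally_in X q x -> X x.
Proof.
  intros HX Hfs.
  destruct (Hfs (/ INR (S 0)) (inv_INR_S_pos 0)) as [delta [Hdelta Hshadow]].
  destruct (inv_INR_S_lt delta Hdelta) as [p Hp].
  exists (S (S p)); intros x Hloc.
  destruct (choice _ Hloc) as [zs Hzs].
  destruct HX as [Hclosed _]; apply Hclosed; intro n.
  destruct (Hshadow n zs) as [w [Hw Hclose]].
  - intros k _; apply Hzs.
  - intros k _; eapply Rlt_trans; [| exact Hp].
    apply dPi_lt_iff; intros j Hj; unfold shift.
    rewrite (proj2 (Hzs k)), (proj2 (Hzs (S k))) by lia; f_equal; lia.
  - exists w; split; [exact Hw |]; intros i Hi.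
    pose proof (proj1 (dPi_lt_iff _ _ 0) (Hclose i ltac:(lia)) 0%nat (le_n 0)) as Hw0.
    rewrite shift_iter_apply, (proj2 (Hzs i)) in Hw0 by lia.
    rewrite !Nat.add_0_r in Hw0; exact Hw0.
Qed.

End ShiftSpaces.

Theorem proposition2p19 (A : Type)
  (Hcount : exists f : A -> nat, forall a b, f a = f b -> a = b)
  (Hne : inhabited A)
  (X : seqA A -> Prop) (HX : shift_space A X) :
  (finite_order A X <-> shadowing A X) /\ (shadowing A X <-> finite_shadowing A X).
Proof.
  assert (Hfo_sh : finite_order A X -> shadowing A X)
    by (intros [p Hp]; exact (shadowing_of_has_order A X p Hp)).
  assert (Hfs_fo : finite_shadowing A X -> finite_order A X).
  { intro Hfs; destruct (finite_shadowing_locally_in A X HX Hfs) as [q Hq].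
    exists q; exact (has_order_of_locally_in A X q HX Hq). }
  pose proof (finite_shadowing_of_shadowing A X HX) as Hsh_fs.
  split; split; auto.
Qed.
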